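(* (Selection theorem.) Let $S\colon[0,1]\to\mathfrak S_1(\mathbb T)$ be a continuous path with $S(0)=\mathbf 1$. Then there exists a sequence of continuous functions $z_j\colon[0,1]\to\mathbb T$, $j=1,2,\dots$, such that $z_j(0)=1$ for all $j$ and, for every $r\in[0,1]$, the sequence $(z_1(r),z_2(r),\dots)$ is an enumeration of $S(r)$.
   Context: A rigged subset $S$ of a set $X$ assigns to each $x\in X$ a multiplicity $\mathrm{mult}(x;S)\in\{0,1,2,\dots,\infty\}$; an enumeration of a countable rigged set is a sequence in which each $x$ appears exactly $\mathrm{mult}(x;S)$ times. For a metric space $X$ with base point $x_0$, $\mathfrak S_\infty(X)$ is the set of countable rigged subsets of $X$ in which $x_0$ has multiplicity $\infty$ and which have no accumulation point other than $x_0$ (an accumulation point being a point every neighbourhood of which contains infinitely many elements counting multiplicity). For $S,T\in\mathfrak S_\infty(X)$, $d(S,T)=\inf\sum_{j}\mathrm{dist}(s_j,t_j)$ over all enumerations $(s_j)$, $(t_j)$ of $S$ and $T$. $\mathbf x_0$ denotes the rigged set consisting only of $x_0$ with infinite multiplicity, and $\mathfrak S_1(X)=\{S\in\mathfrak S_\infty(X):d(S,\mathbf x_0)<\infty\}$, a metric space with metric $d$. Here $X=\mathbb T$ (unit circle, arc-length metric) with base point $1$, so $\mathbf 1$ is the rigged set with only the point $1$ of infinite multiplicity. *)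

From Stdlib Require Import Reals List ClassicalEpsilon.
From Coquelicot Require Import Coquelicot.
Open Scope R_scope.

Definition Tpt := {p : R * R | (fst p) ^ 2 + (snd p) ^ 2 = 1}.

Definition Tone : Tpt.
Proof. exists (1, 0). simpl. ring. Defined.

Definition tdist (p q : Tpt) : R :=
  acos (fst (proj1_sig p) * fst (proj1_sig q) + snd (proj1_sig p) * snd (proj1_sig q)).

(** Multiplicities in {0,1,2,...,oo}: [Some n] = n, [None] = oo. *)
Definition mult_t := option nat.

Definition rigged := Tpt -> mult_t.

Definition is_enumeration (S : rigged) (z : nat -> Tpt) : Prop :=
  forall x : Tpt,
    match S x with
    | None => forall N : nat, exists j : nat, (N <= j)%nat /\ z j = x
    | Some n => exists l : list nat,
        NoDup l /\ length l = n /\ (forall j : nat, In j l <-> z j = x)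
    end.

Definition rigged_countable (S : rigged) : Prop :=
  exists f : Tpt -> nat, forall x y : Tpt,
    S x <> Some 0%nat -> S y <> Some 0%nat -> f x = f y -> x = y.

Definition finitely_many_in_ball (S : rigged) (x : Tpt) (e : R) : Prop :=
  exists l : list Tpt, forall y : Tpt, tdist x y < e ->
    S y <> None /\ (S y <> Some 0%nat -> In y l).

Definition accumulation_point (S : rigged) (x : Tpt) : Prop :=
  forall e : R, 0 < e -> ~ finitely_many_in_ball S x e.

Definition in_S_infty (S : rigged) : Prop :=
  S Tone = None /\ rigged_countable S /\
  (forall x : Tpt, accumulation_point S x -> x = Tone).

Definition enum_cost (s t : nat -> Tpt) : Rbar :=
  Lim_seq (fun N => sum_n (fun j => tdist (s j) (t j)) N).

Definition rdist (S T : rigged) : Rbar :=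
  Rbar_glb (fun c : Rbar => exists s t : nat -> Tpt,
    is_enumeration S s /\ is_enumeration T t /\ c = enum_cost s t).

Definition rigged_one : rigged :=
  fun x => if excluded_middle_informative (x = Tone) then None else Some 0%nat.

Definition in_S1 (S : rigged) : Prop :=
  in_S_infty S /\ Rbar_lt (rdist S rigged_one) p_infty.

(** Around a parameter [r0], cut the circle at a point [cis al] lying at
    distance [>= eta] from every point of [S r] for [r] near [r0]; this is
    possible because only finitely many points of [S r0] are far from [1].
    Lifting the cut circle to the interval [(al - 2 PI, al]], the [k]-th
    smallest negative lift and the [k]-th largest positive lift of the points
    of [S r], interleaved with infinitely many copies of [1], enumerate
    [S r].  Order statistics are 1-Lipschitz for the transport distance [d],
    so this enumeration depends continuously on [r].  Two enumerations of
    the same rigged set differ by a permutation of the indices, so local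
    selections glue, and a supremum argument propagates a selection from
    [0] to the whole of [[0, 1]]. *)

From Stdlib Require Import Reals List Lra Lia ZArith ClassicalEpsilon ProofIrrelevance Classical.
From Coquelicot Require Import Coquelicot.
Open Scope R_scope.

(** * The circle *)

Lemma Tpt_eq (x y : Tpt) : proj1_sig x = proj1_sig y -> x = y.
Proof.
  destruct x as [p hp], y as [q hq]; simpl; intros ->.
  f_equal; apply proof_irrelevance.
Qed.

Definition cis (t : R) : Tpt.
Proof.
  exists (cos t, sin t). simpl. pose proof (sin2_cos2 t) as h. unfold Rsqr in h. nra.
Defined.

Lemma cis_0 : cis 0 = Tone.
Proof. apply Tpt_eq; simpl. rewrite cos_0, sin_0. reflexivity. Qed.

Lemma tdist_cis a b : tdist (cis a) (cis b) = acos (cos (a - b)).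
Proof. unfold tdist; simpl. rewrite cos_minus. reflexivity. Qed.

Lemma acos_cos_abs d : Rabs d <= PI -> acos (cos d) = Rabs d.
Proof.
  intros H. destruct (Rle_dec 0 d).
  - rewrite Rabs_pos_eq in * by lra. apply acos_cos. lra.
  - rewrite Rabs_left in * by lra. rewrite <- cos_neg. apply acos_cos. lra.
Qed.

Lemma acos_cos_reflect d : PI <= Rabs d <= 2 * PI -> acos (cos d) = 2 * PI - Rabs d.
Proof.
  intros H. assert (E : cos d = cos (2 * PI - Rabs d)).
  { rewrite cos_minus, cos_2PI, sin_2PI.
    destruct (Rle_dec 0 d).
    - rewrite Rabs_pos_eq by lra. ring.
    - rewrite Rabs_left by lra. rewrite cos_neg. ring. }
  rewrite E. apply acos_cos. lra.
Qed.

Lemma tdist_nonneg x y : 0 <= tdist x y.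
Proof. apply acos_bound. Qed.

Lemma tdist_sym x y : tdist x y = tdist y x.
Proof. unfold tdist. f_equal. ring. Qed.

Lemma tdist_refl x : tdist x x = 0.
Proof.
  unfold tdist. destruct x as [[p q] h]; simpl in *.
  replace (p * p + q * q) with 1 by lra. apply acos_1.
Qed.

Lemma tdist_cis_le a b : tdist (cis a) (cis b) <= Rabs (a - b).
Proof.
  rewrite tdist_cis. destruct (Rle_dec (Rabs (a - b)) PI).
  - rewrite acos_cos_abs; lra.
  - pose proof (acos_bound (cos (a - b))). lra.
Qed.

Lemma tdist_cis_ge a b : Rabs (a - b) <= 2 * PI ->
  Rmin (Rabs (a - b)) (2 * PI - Rabs (a - b)) <= tdist (cis a) (cis b).
Proof.
  intros h. rewrite tdist_cis. destruct (Rle_dec (Rabs (a - b)) PI).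
  - rewrite acos_cos_abs by lra. apply Rmin_l.
  - rewrite acos_cos_reflect by lra. apply Rmin_r.
Qed.

Lemma cis_periodic t (n : Z) : cis (t + 2 * PI * IZR n) = cis t.
Proof.
  apply Tpt_eq; simpl.
  destruct (Z_le_gt_dec 0 n) as [h|h].
  - rewrite <- (Z2Nat.id n), <- INR_IZR_INZ by lia.
    replace (t + 2 * PI * INR (Z.to_nat n)) with (t + 2 * INR (Z.to_nat n) * PI) by ring.
    rewrite cos_period, sin_period. reflexivity.
  - pose proof (cos_period (t + 2 * PI * IZR n) (Z.to_nat (- n))) as A.
    pose proof (sin_period (t + 2 * PI * IZR n) (Z.to_nat (- n))) as B.
    rewrite INR_IZR_INZ, Z2Nat.id, opp_IZR in A, B by lia.
    replace (t + 2 * PI * IZR n + 2 * - IZR n * PI) with t in A, B by ring.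
    rewrite A, B. reflexivity.
Qed.

Lemma cis_surj (x : Tpt) : exists t, - PI <= t <= PI /\ x = cis t.
Proof.
  destruct x as [[p q] h]; simpl in h.
  assert (Hp : -1 <= p <= 1) by nra.
  assert (Hs : sqrt (1 - p²) = Rabs q).
  { replace (1 - p²) with (q²) by (unfold Rsqr; lra). apply sqrt_Rsqr_abs. }
  pose proof (acos_bound p).
  destruct (Rle_dec 0 q).
  - exists (acos p). split; [lra|]. apply Tpt_eq; simpl.
    rewrite cos_acos, sin_acos, Hs, Rabs_pos_eq; auto.
  - exists (- acos p). split; [lra|]. apply Tpt_eq; simpl.
    rewrite cos_neg, sin_neg, cos_acos, sin_acos, Hs, Rabs_left by lra. f_equal; lra.
Qed.

Lemma cis_surj_window (x : Tpt) (c : R) : exists t, c - 2 * PI < t <= c /\ x = cis t.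
Proof.
  destruct (cis_surj x) as [t0 [_ ->]]. pose proof PI_RGT_0.
  set (u := (c - t0) / (2 * PI)). destruct (archimed u) as [A B].
  exists (t0 + 2 * PI * IZR (up u - 1)). split.
  - rewrite minus_IZR. unfold u in *.
    assert (E : c - t0 = 2 * PI * ((c - t0) / (2 * PI))) by (field; lra).
    split; nra.
  - rewrite cis_periodic. reflexivity.
Qed.

Lemma cis_inj_window a b : Rabs (a - b) < 2 * PI -> cis a = cis b -> a = b.
Proof.
  intros H E. assert (T : tdist (cis a) (cis b) = 0) by (rewrite E; apply tdist_refl).
  rewrite tdist_cis in T. destruct (Rle_dec (Rabs (a - b)) PI).
  - rewrite acos_cos_abs in T by lra. destruct (Rle_dec 0 (a - b)).
    + rewrite Rabs_pos_eq in T; lra.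
    + rewrite Rabs_left in T; lra.
  - rewrite acos_cos_reflect in T by lra. lra.
Qed.

Lemma tdist_triangle x y z : tdist x z <= tdist x y + tdist y z.
Proof.
  destruct (cis_surj_window y PI) as [b [_ ->]].
  destruct (cis_surj_window x (b + PI)) as [a [Ha ->]].
  destruct (cis_surj_window z (b + PI)) as [c [Hc ->]].
  rewrite !tdist_cis.
  rewrite (acos_cos_abs (a - b)) by (apply Rabs_le; lra).
  rewrite (acos_cos_abs (b - c)) by (apply Rabs_le; lra).
  rewrite <- tdist_cis. eapply Rle_trans; [apply tdist_cis_le|].
  replace (a - c) with ((a - b) + (b - c)) by ring. apply Rabs_triang.
Qed.

(** * Counting subsets of the natural numbers *)

Open Scope nat_scope.

Definition decb (P : Prop) : bool := if excluded_middle_informative P then true else false.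

Lemma decbP P : Bool.reflect P (decb P).
Proof. unfold decb; destruct excluded_middle_informative; constructor; auto. Qed.

Definition count_lt (Q : nat -> Prop) (M : nat) : nat :=
  length (filter (fun j => decb (Q j)) (seq 0 M)).
Definition bounded_by (Q : nat -> Prop) (M : nat) := forall j, Q j -> j < M.
Definition finite_nat (Q : nat -> Prop) := exists M, bounded_by Q M.
Definition infinite_nat (Q : nat -> Prop) := forall N, exists j, N <= j /\ Q j.

Lemma count_lt_S Q M : count_lt Q (S M) = count_lt Q M + (if decb (Q M) then 1 else 0).
Proof.
  unfold count_lt. rewrite seq_S, filter_app, length_app. simpl.
  destruct (decb (Q M)); simpl; lia.
Qed.

Lemma count_lt_S_true Q M : Q M -> count_lt Q (S M) = S (count_lt Q M).
Proof. intros h. rewrite count_lt_S. destruct (decbP (Q M)); [lia|tauto]. Qed.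

Lemma count_lt_S_false Q M : ~ Q M -> count_lt Q (S M) = count_lt Q M.
Proof. intros h. rewrite count_lt_S. destruct (decbP (Q M)); [tauto|lia]. Qed.

Lemma count_lt_ext Q Q' M : (forall j, j < M -> (Q j <-> Q' j)) -> count_lt Q M = count_lt Q' M.
Proof.
  induction M; intros H; auto. rewrite !count_lt_S, IHM by (intros; apply H; lia).
  pose proof (H M (Nat.lt_succ_diag_r M)).
  destruct (decbP (Q M)), (decbP (Q' M)); auto; tauto.
Qed.

Lemma count_lt_mono Q Q' M : (forall j, j < M -> Q j -> Q' j) -> count_lt Q M <= count_lt Q' M.
Proof.
  induction M; intros H; auto. rewrite !count_lt_S.
  specialize (IHM (fun j hj => H j (Nat.lt_lt_succ_r _ _ hj))).
  destruct (decbP (Q M)), (decbP (Q' M)); try lia. exfalso; auto.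
Qed.

Lemma count_lt_mono_r Q M M' : M <= M' -> count_lt Q M <= count_lt Q M'.
Proof. induction 1; auto. rewrite count_lt_S. destruct decb; lia. Qed.

Lemma count_lt_strict Q i i' : i < i' -> Q i -> count_lt Q i < count_lt Q i'.
Proof.
  intros h q. pose proof (count_lt_mono_r Q (S i) i' h). rewrite count_lt_S_true in *; auto.
Qed.

Lemma count_lt_stable Q M M' : bounded_by Q M -> M <= M' -> count_lt Q M' = count_lt Q M.
Proof.
  intros B; induction 1; auto. rewrite count_lt_S_false; auto. intros h; apply B in h; lia.
Qed.

Lemma count_lt_or Q Q' M : (forall j, Q j -> Q' j -> False) ->
  count_lt (fun j => Q j \/ Q' j) M = count_lt Q M + count_lt Q' M.
Proof.
  intros D. induction M; auto. rewrite !count_lt_S, IHM.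
  destruct (decbP (Q M)), (decbP (Q' M)), (decbP (Q M \/ Q' M)); try lia; exfalso; firstorder.
Qed.

Lemma count_lt_interval p q n : n <= q -> count_lt (fun k => p <= k /\ k < q) n = n - p.
Proof.
  induction n; intros h; auto. rewrite count_lt_S, IHn by lia.
  destruct (decbP (p <= n /\ n < q)); lia.
Qed.

Lemma count_lt_inj Q i i' : Q i -> Q i' -> count_lt Q i = count_lt Q i' -> i = i'.
Proof.
  intros h h' E. destruct (Nat.lt_trichotomy i i') as [l|[l|l]]; auto;
    apply (count_lt_strict Q) in l; auto; lia.
Qed.

Lemma count_lt_rank Q k M : k < count_lt Q M -> exists i, Q i /\ count_lt Q i = k.
Proof.
  induction M; intros h; [unfold count_lt in h; simpl in h; lia|].
  rewrite count_lt_S in h. destruct (Nat.lt_ge_cases k (count_lt Q M)) as [l|l]; auto.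
  destruct (decbP (Q M)); [|lia]. exists M; split; auto; lia.
Qed.

Lemma count_lt_unbounded Q : infinite_nat Q -> forall k, exists M, k < count_lt Q M.
Proof.
  intros I k. induction k as [|k [M HM]].
  - destruct (I 0) as [j [_ hj]]. exists (S j). rewrite count_lt_S_true; auto. lia.
  - destruct (I M) as [j [hj qj]]. exists (S j).
    rewrite count_lt_S_true; auto. pose proof (count_lt_mono_r Q M j hj). lia.
Qed.

Lemma infinite_not_finite Q : infinite_nat Q -> ~ finite_nat Q.
Proof. intros I [M B]. destruct (I M) as [j [h1 h2]]. apply B in h2. lia. Qed.

Lemma not_finite_infinite Q : ~ finite_nat Q -> infinite_nat Q.
Proof.
  intros F N. apply NNPP; intros C. apply F. exists N. intros j hj.
  destruct (Nat.lt_ge_cases j N); auto. exfalso; apply C; eauto.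
Qed.

(** Junk value [0] when [Q] is infinite. *)
Definition card (Q : nat -> Prop) : nat :=
  match excluded_middle_informative (finite_nat Q) with
  | left h => count_lt Q (proj1_sig (constructive_indefinite_description _ h))
  | right _ => 0
  end.

Lemma card_count_lt Q M : bounded_by Q M -> card Q = count_lt Q M.
Proof.
  intros B. unfold card. destruct excluded_middle_informative as [h|h].
  - destruct constructive_indefinite_description as [M' B']; simpl.
    destruct (Nat.le_ge_cases M M').
    + apply count_lt_stable; auto.
    + symmetry; apply count_lt_stable; auto.
  - exfalso; apply h; exists M; auto.
Qed.

Lemma card_mono Q Q' : finite_nat Q' -> (forall j, Q j -> Q' j) ->
  finite_nat Q /\ card Q <= card Q'.
Proof.
  intros [M B] H. assert (B' : bounded_by Q M) by (intros j hj; auto).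
  split; [exists M; auto|].
  rewrite (card_count_lt Q M), (card_count_lt Q' M) by auto. apply count_lt_mono; auto.
Qed.

Lemma card_ext Q Q' : (forall j, Q j <-> Q' j) -> card Q = card Q'.
Proof.
  intros H. destruct (classic (finite_nat Q)) as [[M B]|F].
  - assert (B' : bounded_by Q' M) by (intros j hj; apply B, H; auto).
    rewrite (card_count_lt Q M B), (card_count_lt Q' M B'). apply count_lt_ext; auto.
  - assert (F' : ~ finite_nat Q')
      by (intros [M B]; apply F; exists M; intros j hj; apply B, H; auto).
    unfold card. do 2 (destruct excluded_middle_informative; [tauto|]). reflexivity.
Qed.

Lemma card_empty Q : (forall j, ~ Q j) -> card Q = 0.
Proof. intros H. rewrite (card_count_lt Q 0); auto. intros j h; exfalso; eapply H; eauto. Qed.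

Lemma card_list Q : finite_nat Q ->
  exists l, NoDup l /\ length l = card Q /\ forall j, In j l <-> Q j.
Proof.
  intros [M B]. exists (filter (fun j => decb (Q j)) (seq 0 M)). split; [|split].
  - apply NoDup_filter, seq_NoDup.
  - rewrite (card_count_lt Q M); auto.
  - intros j. rewrite filter_In, in_seq. destruct (decbP (Q j)) as [q|q]; split.
    + tauto.
    + intros _. apply B in q. split; [lia|auto].
    + intros [_ e]; discriminate.
    + tauto.
Qed.

Lemma list_card Q l : NoDup l -> (forall j, In j l <-> Q j) ->
  finite_nat Q /\ card Q = length l.
Proof.
  intros N H. set (M := S (fold_right Nat.max 0 l)).
  assert (B : bounded_by Q M).
  { intros j hj. apply H in hj. unfold M. clear - hj. induction l; simpl in *; [tauto|].
    destruct hj as [->|hj]; [lia|]. apply IHl in hj; lia. }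
  split; [exists M; auto|].
  destruct (card_list Q (ex_intro _ M B)) as [l' [N' [L' E']]]. rewrite <- L'.
  apply Nat.le_antisymm; apply NoDup_incl_length; auto;
    intros j hj; [apply H, E'|apply E', H]; auto.
Qed.

Lemma bounded_fun (g : nat -> nat) N : exists B, forall j, j < N -> g j < B.
Proof.
  induction N as [|N [B HB]]; [exists 0; intros; lia|].
  exists (Nat.max B (S (g N))). intros j hj.
  destruct (Nat.eq_dec j N); subst; [lia|]. specialize (HB j ltac:(lia)). lia.
Qed.

Lemma card_image Q (g : nat -> nat) : (forall a b, g a = g b -> a = b) -> finite_nat Q ->
  finite_nat (fun i => exists k, i = g k /\ Q k) /\
  card (fun i => exists k, i = g k /\ Q k) = card Q.
Proof.
  intros Hg F. destruct (card_list Q F) as [l [N [L E]]].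
  destruct (list_card (fun i => exists k, i = g k /\ Q k) (map g l)) as [A B].
  - apply NoDup_map_NoDup_ForallPairs; auto. intros a b _ _; auto.
  - intros i. rewrite in_map_iff. split.
    + intros [k [<- hk]]. exists k; split; auto. apply E; auto.
    + intros [k [-> hk]]. exists k; split; auto. apply E; auto.
  - rewrite B, length_map; auto.
Qed.

Close Scope nat_scope.

Lemma list_argmin (l : list nat) (P : nat -> Prop) (g : nat -> R) :
  (exists j, In j l /\ P j) -> exists j, In j l /\ P j /\ forall i, In i l -> P i -> g j <= g i.
Proof.
  induction l as [|a l IH]; intros [j [hj pj]]; [destruct hj|].
  destruct (classic (exists j, In j l /\ P j)) as [E|E].
  - destruct (IH E) as [m [hm [pm Hm]]].
    destruct (Rle_dec (g a) (g m)); [destruct (classic (P a))|].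
    + exists a; split; [left; auto|split; auto].
      intros i [<-|hi] pi; [lra|]. specialize (Hm i hi pi); lra.
    + exists m; split; [right; auto|split; auto]. intros i [<-|hi] pi; [tauto|auto].
    + exists m; split; [right; auto|split; auto]. intros i [<-|hi] pi; [lra|auto].
  - destruct hj as [<-|hj]; [|exfalso; apply E; eauto].
    exists a; split; [left; auto|split; auto].
    intros i [<-|hi] pi; [lra|]. exfalso; apply E; eauto.
Qed.

Lemma finite_argmax (Q : nat -> Prop) (g : nat -> R) : finite_nat Q -> (exists j, Q j) ->
  exists j, Q j /\ forall i, Q i -> g i <= g j.
Proof.
  intros F [j0 q0]. destruct (card_list Q F) as [l [_ [_ E]]].
  destruct (list_argmin l Q (fun j => - g j)) as [j [hj [pj H]]].
  { exists j0; split; auto; apply E; auto. }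
  exists j; split; auto. intros i qi. specialize (H i (proj2 (E i) qi) qi). lra.
Qed.

(** * Enumerations *)

Lemma enumeration_iff_card (S : rigged) z : is_enumeration S z <->
  forall x, match S x with
            | None => infinite_nat (fun j => z j = x)
            | Some n => finite_nat (fun j => z j = x) /\ card (fun j => z j = x) = n
            end.
Proof.
  split; intros H x; specialize (H x); destruct (S x) as [n|]; auto.
  - destruct H as [l [N [L E]]]. destruct (list_card _ l N E). split; congruence.
  - destruct H as [F C]. destruct (card_list _ F) as [l [N [L E]]].
    exists l; repeat split; auto; try congruence; apply E.
Qed.

Lemma enumeration_ext (S1 S2 : rigged) z :
  (forall x, S1 x = S2 x) -> is_enumeration S1 z -> is_enumeration S2 z.
Proof. intros E H x. rewrite <- E. apply H. Qed.

Lemma enumeration_support (S : rigged) s j : is_enumeration S s -> S (s j) <> Some 0%nat.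
Proof.
  intros H E. specialize (H (s j)). rewrite E in H. destruct H as [l [_ [L I]]].
  destruct l; [|discriminate]. apply (proj2 (I j)); auto.
Qed.

Lemma enumeration_hits (S : rigged) t x : is_enumeration S t -> S x <> Some 0%nat ->
  exists j, t j = x.
Proof.
  intros H hx. specialize (H x). destruct (S x) as [n|].
  - destruct H as [l [_ [L E]]]. destruct l as [|j l]; [simpl in L; subst; tauto|].
    exists j. apply E; left; auto.
  - destruct (H 0%nat) as [j [_ e]]; eauto.
Qed.

Lemma enumeration_one t : is_enumeration rigged_one t -> forall j, t j = Tone.
Proof.
  intros H j. pose proof (enumeration_support _ _ j H) as h. unfold rigged_one in h.
  destruct excluded_middle_informative; tauto.
Qed.

Lemma in_S_infty_none S x : in_S_infty S -> S x = None -> x = Tone.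
Proof.
  intros [_ [_ H]] E. apply H. intros e he [l Hl]. destruct (Hl x) as [A _].
  - rewrite tdist_refl; auto.
  - tauto.
Qed.

Section Reindexing.
Variables pi sg : nat -> nat.
Hypotheses (sg_pi : forall j, sg (pi j) = j) (pi_sg : forall i, pi (sg i) = i).

Lemma card_reindex Q : finite_nat Q ->
  finite_nat (fun j => Q (pi j)) /\ card (fun j => Q (pi j)) = card Q.
Proof.
  intros F. destruct (card_list Q F) as [l [N [L E]]].
  assert (N' : NoDup (map sg l)).
  { apply NoDup_map_NoDup_ForallPairs; auto.
    intros a b _ _ h. rewrite <- (pi_sg a), <- (pi_sg b), h; auto. }
  destruct (list_card (fun j => Q (pi j)) (map sg l) N') as [A B].
  { intros j. rewrite in_map_iff. split.
    - intros [i [<- hi]]. rewrite pi_sg. apply E; auto.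
    - intros h. exists (pi j). split; auto. apply E; auto. }
  rewrite B, length_map; auto.
Qed.

Lemma infinite_reindex Q : infinite_nat Q -> infinite_nat (fun j => Q (pi j)).
Proof.
  intros I. apply not_finite_infinite. intros [M B]. apply (infinite_not_finite Q I).
  destruct (bounded_fun pi M) as [C HC]. exists C.
  intros i hi. rewrite <- (pi_sg i). apply HC, B. rewrite pi_sg; auto.
Qed.

Lemma enumeration_reindex S f : is_enumeration S f -> is_enumeration S (fun j => f (pi j)).
Proof.
  rewrite !enumeration_iff_card. intros H x. specialize (H x). destruct (S x).
  - destruct H as [F C]. destruct (card_reindex _ F). split; congruence.
  - apply (infinite_reindex (fun j => f j = x)); auto.
Qed.
End Reindexing.

Lemma enumeration_rank (S : rigged) z x k : is_enumeration S z ->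
  ((exists M, (k < count_lt (fun j => z j = x) M)%nat) <->
     match S x with None => True | Some n => (k < n)%nat end).
Proof.
  rewrite enumeration_iff_card. intros H. specialize (H x). destruct (S x) as [n|].
  - destruct H as [[M B] C]. rewrite (card_count_lt _ M B) in C. split.
    + intros [M' h]. destruct (Nat.le_ge_cases M M') as [l|l].
      * rewrite (count_lt_stable _ M M' B l) in h; lia.
      * pose proof (count_lt_mono_r (fun j => z j = x) _ _ l). lia.
    + intros h. exists M; lia.
  - split; auto. intros _. apply count_lt_unbounded; auto.
Qed.

(** The [k]-th occurrence of a point in [e] is matched with its [k]-th occurrence in [f]. *)
Lemma enumeration_match (A : rigged) e f : is_enumeration A e -> is_enumeration A f ->
  forall j, exists i, f i = e j /\
    count_lt (fun i => f i = e j) i = count_lt (fun i => e i = e j) j.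
Proof.
  intros He Hf j.
  assert (R : exists M, (count_lt (fun i => e i = e j) j < count_lt (fun i => f i = e j) M)%nat).
  { apply (enumeration_rank A f _ _ Hf), (enumeration_rank A e _ _ He).
    exists (S j). rewrite count_lt_S_true; auto. }
  destruct R as [M h]. destruct (count_lt_rank _ _ _ h) as [i [? ?]]. eauto.
Qed.

Lemma enumerations_bij (S : rigged) e f : is_enumeration S e -> is_enumeration S f ->
  exists pi sg : nat -> nat, (forall j, sg (pi j) = j) /\ (forall i, pi (sg i) = i) /\
    (forall j, f (pi j) = e j).
Proof.
  intros He Hf.
  set (match_of := fun (e f : nat -> Tpt) j => epsilon (inhabits 0%nat) (fun i => f i = e j /\
         count_lt (fun i => f i = e j) i = count_lt (fun i => e i = e j) j)).
  assert (Hm : forall e f, is_enumeration S e -> is_enumeration S f -> forall j,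
    f (match_of e f j) = e j /\
    count_lt (fun i => f i = e j) (match_of e f j) = count_lt (fun i => e i = e j) j).
  { intros e' f' He' Hf' j. apply epsilon_spec, (enumeration_match S); auto. }
  exists (match_of e f), (match_of f e). split; [|split].
  - intros j. destruct (Hm e f He Hf j) as [A B]. destruct (Hm f e Hf He (match_of e f j)) as [C D].
    rewrite A in C, D. rewrite B in D. apply (count_lt_inj (fun i => e i = e j)); auto.
  - intros i. destruct (Hm f e Hf He i) as [A B]. destruct (Hm e f He Hf (match_of f e i)) as [C D].
    rewrite A in C, D. rewrite B in D. apply (count_lt_inj (fun j => f j = f i)); auto.
  - intros j; apply Hm; auto.
Qed.

Lemma enumeration_card_transfer (S : rigged) e f (P : Tpt -> Prop) :
  is_enumeration S e -> is_enumeration S f -> finite_nat (fun j => P (e j)) ->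
  finite_nat (fun j => P (f j)) /\ card (fun j => P (f j)) = card (fun j => P (e j)).
Proof.
  intros He Hf F. destruct (enumerations_bij S f e Hf He) as [pi [sg [H1 [H2 H3]]]].
  destruct (card_reindex pi sg H1 H2 (fun i => P (e i)) F) as [[M HM] B].
  assert (E : forall j, P (e (pi j)) <-> P (f j)) by (intros j; rewrite H3; tauto).
  split.
  - exists M. intros j hj. apply HM, E; auto.
  - rewrite <- B. apply card_ext. intros j; rewrite E; tauto.
Qed.

(** * Transport costs *)

Lemma sum_Sn_R (f : nat -> R) n : sum_n f (S n) = sum_n f n + f (S n).
Proof. rewrite sum_Sn. reflexivity. Qed.

Lemma sum_n_nonneg (f : nat -> R) n : (forall j, 0 <= f j) -> 0 <= sum_n f n.
Proof.
  intros H; induction n; [rewrite sum_O; auto|]. rewrite sum_Sn_R. specialize (H (S n)). lra.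
Qed.

Lemma sum_n_mono (f : nat -> R) n m : (forall j, 0 <= f j) -> (n <= m)%nat -> sum_n f n <= sum_n f m.
Proof. intros H; induction 1; [lra|]. rewrite sum_Sn_R. specialize (H (S m)). lra. Qed.

Lemma sum_n_ge_term (f : nat -> R) n : (forall j, 0 <= f j) -> f n <= sum_n f n.
Proof.
  intros H; destruct n; [rewrite sum_O; lra|].
  rewrite sum_Sn_R. pose proof (sum_n_nonneg f n H). lra.
Qed.

Lemma sum_n_le_Lim_seq (f : nat -> R) N : (forall j, 0 <= f j) ->
  Rbar_le (sum_n f N) (Lim_seq (fun M => sum_n f M)).
Proof.
  intros H. rewrite <- (Lim_seq_const (sum_n f N)). apply Lim_seq_le_loc.
  exists N. intros n hn. apply sum_n_mono; auto.
Qed.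

Lemma enum_cost_lt_sum s t c : Rbar_lt (enum_cost s t) (Finite c) ->
  forall N, sum_n (fun j => tdist (s j) (t j)) N < c.
Proof.
  intros H N. pose proof (sum_n_le_Lim_seq (fun j => tdist (s j) (t j)) N (fun j => tdist_nonneg _ _)).
  unfold enum_cost in H. destruct Lim_seq; simpl in *; lra.
Qed.

Lemma enum_cost_lt_term s t c : Rbar_lt (enum_cost s t) (Finite c) -> forall j, tdist (s j) (t j) < c.
Proof.
  intros H j. pose proof (enum_cost_lt_sum s t c H j).
  pose proof (sum_n_ge_term (fun j => tdist (s j) (t j)) j (fun j => tdist_nonneg _ _)). lra.
Qed.

Lemma rdist_lt_witness S T c : Rbar_lt (rdist S T) c ->
  exists s t, is_enumeration S s /\ is_enumeration T t /\ Rbar_lt (enum_cost s t) c.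
Proof.
  intros H. apply NNPP; intros N. unfold rdist, Rbar_glb in H.
  destruct (Rbar_ex_glb _) as [l [LB G]]; simpl in H.
  assert (Hcl : Rbar_le c l).
  { apply G. intros x [s [t [hs [ht ->]]]]. destruct (Rbar_le_lt_dec c (enum_cost s t)); auto.
    exfalso; apply N; eauto. }
  apply (Rbar_lt_not_le _ _ H Hcl).
Qed.

Definition bounded_cost (s : nat -> Tpt) (B : R) :=
  forall N, sum_n (fun j => tdist (s j) Tone) N <= B.

Lemma in_S1_bounded_enumeration S : in_S1 S -> exists s B, is_enumeration S s /\ bounded_cost s B.
Proof.
  intros [_ H]. destruct (rdist_lt_witness _ _ _ H) as [s [t [hs [ht hc]]]].
  unfold enum_cost in hc.
  pose proof (sum_n_le_Lim_seq (fun j => tdist (s j) (t j)) 0 (fun j => tdist_nonneg _ _)) as H0.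
  destruct (Lim_seq _) as [B| |] eqn:E; simpl in *; try tauto.
  exists s, B. split; auto. intros N.
  rewrite (sum_n_ext _ (fun j => tdist (s j) (t j))) by (intros j; rewrite (enumeration_one t ht j); auto).
  pose proof (sum_n_le_Lim_seq (fun j => tdist (s j) (t j)) N (fun j => tdist_nonneg _ _)) as HN.
  rewrite E in HN. exact HN.
Qed.

Lemma count_large_le_sum (c : nat -> R) d n : 0 < d -> (forall j, 0 <= c j) ->
  INR (count_lt (fun j => d <= c j) (S n)) * d <= sum_n c n.
Proof.
  intros hd H. induction n.
  - rewrite sum_O, count_lt_S. specialize (H 0%nat).
    destruct (decbP (d <= c 0%nat)); simpl; lra.
  - rewrite sum_Sn_R, count_lt_S, plus_INR. specialize (H (S n)).
    destruct (decbP (d <= c (S n))); simpl in *; lra.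
Qed.

Lemma finitely_many_large (c : nat -> R) B d : 0 < d -> (forall j, 0 <= c j) ->
  (forall N, sum_n c N <= B) -> finite_nat (fun j => d <= c j).
Proof.
  intros hd H HB. apply NNPP; intros F. apply not_finite_infinite in F.
  destruct (INR_unbounded (B / d)) as [k hk].
  destruct (count_lt_unbounded _ F k) as [[|M] HM]; [unfold count_lt in HM; simpl in HM; lia|].
  pose proof (count_large_le_sum c d M hd H). specialize (HB M).
  apply lt_INR in HM. assert (B / d * d = B) by (field; lra).
  assert (INR k * d < INR (count_lt (fun j => d <= c j) (S M)) * d) by (apply Rmult_lt_compat_r; lra).
  assert (B / d * d < INR k * d) by (apply Rmult_lt_compat_r; lra). lra.
Qed.

(** * Order statistics of the negative values of a sequence *)

Definition sparse_below0 (u : nat -> R) := forall a, a < 0 -> finite_nat (fun j => u j <= a).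

Definition count_le (u : nat -> R) (a : R) : nat := card (fun j => u j <= a).

(** [order_stat u k] (for [k >= 1]) is the [k]-th smallest value of [u]
    counted with multiplicity if [u] has at least [k] negative values, and
    [0] otherwise. *)
Definition order_stat_spec (u : nat -> R) (k : nat) (v : R) :=
  v <= 0 /\ forall a, a < 0 -> ((k <= count_le u a)%nat <-> v <= a).

Definition order_stat (u : nat -> R) (k : nat) : R := epsilon (inhabits 0) (order_stat_spec u k).

Section OrderStatistics.
Variable u : nat -> R.
Hypothesis u_sparse : sparse_below0 u.

Lemma count_le_mono a b : b < 0 -> a <= b -> (count_le u a <= count_le u b)%nat.
Proof. intros hb hab. apply card_mono; [apply u_sparse; auto|]. intros j; lra. Qed.

Lemma count_le_attained a : a < 0 -> (1 <= count_le u a)%nat ->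
  exists j, u j <= a /\ count_le u (u j) = count_le u a.
Proof.
  intros ha h. assert (Ex : exists j, u j <= a).
  { apply NNPP; intros N. unfold count_le in h. rewrite card_empty in h; [lia|].
    intros j hj; apply N; eauto. }
  destruct (finite_argmax _ u (u_sparse a ha) Ex) as [j [hj Hj]].
  exists j; split; auto. apply card_ext. intros i; split; intros; [lra|auto].
Qed.

Lemma order_stat_exists k : (1 <= k)%nat -> exists v, order_stat_spec u k v.
Proof.
  intros hk. destruct (classic (exists a, a < 0 /\ (k <= count_le u a)%nat)) as [[a0 [ha0 hc0]]|N].
  - destruct (card_list _ (u_sparse a0 ha0)) as [l [_ [_ E]]].
    destruct (list_argmin l (fun j => (k <= count_le u (u j))%nat) u) as [j [hj [pj Hj]]].
    { destruct (count_le_attained a0 ha0 ltac:(lia)) as [j [hj Cj]].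
      exists j. split; [apply E; auto|lia]. }
    assert (uj : u j <= a0) by (apply E; auto).
    exists (u j). split; [lra|]. intros a ha. split.
    + intros h. destruct (Rle_dec (u j) a) as [|n]; auto. exfalso.
      destruct (count_le_attained a ha ltac:(lia)) as [i [hi Ci]].
      specialize (Hj i ltac:(apply E; lra) ltac:(lia)). lra.
    + intros h. pose proof (count_le_mono (u j) a ha h). lia.
  - exists 0. split; [lra|]. intros a ha. split; [|lra]. intros h; exfalso; eauto.
Qed.

Lemma order_stat_correct k : (1 <= k)%nat -> order_stat_spec u k (order_stat u k).
Proof. intros hk. unfold order_stat. apply epsilon_spec, order_stat_exists; auto. Qed.

Lemma order_stat_nonpos k : (1 <= k)%nat -> order_stat u k <= 0.
Proof. intros hk; exact (proj1 (order_stat_correct k hk)). Qed.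

Lemma order_stat_ge k m : (1 <= k)%nat -> m <= 0 -> (forall j, m <= u j) -> m <= order_stat u k.
Proof.
  intros hk hm H. destruct (Rle_dec m (order_stat u k)) as [|n]; auto. exfalso.
  set (a := (order_stat u k + m) / 2).
  destruct (order_stat_correct k hk) as [_ Hs].
  assert (h : order_stat u k <= a) by (unfold a; lra).
  apply (Hs a ltac:(unfold a; lra)) in h. unfold count_le in h. rewrite card_empty in h; [lia|].
  intros j hj. specialize (H j). unfold a in hj. lra.
Qed.

Lemma order_stat_lt_iff k a : (1 <= k)%nat -> a < 0 ->
  (order_stat u k < a <-> (k <= card (fun j => (u j < a)%R))%nat).
Proof.
  intros hk ha. destruct (order_stat_correct k hk) as [h0 Hs].
  assert (Fa : finite_nat (fun j => u j < a)).
  { destruct (u_sparse a ha) as [M B]. exists M; intros j hj; apply B; lra. }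
  split.
  - intros h. assert (h1 : (k <= count_le u (order_stat u k))%nat) by (apply Hs; lra).
    eapply Nat.le_trans; [apply h1|]. apply card_mono; auto. intros j; lra.
  - intros h. assert (Ex : exists j, u j < a).
    { apply NNPP; intros N. rewrite card_empty in h; [lia|]. intros j hj; apply N; eauto. }
    destruct (finite_argmax _ u Fa Ex) as [j [hj Hj]].
    assert (count_le u (u j) = card (fun i => u i < a)).
    { apply card_ext; intros i; split; intros; [lra|apply Hj; auto]. }
    assert (order_stat u k <= u j) by (apply Hs; lra || lia). lra.
Qed.

Lemma order_stat_mult a : a < 0 ->
  finite_nat (fun k => order_stat u (S k) = a) /\
  card (fun k => order_stat u (S k) = a) = card (fun j => u j = a).
Proof.
  intros ha. destruct (u_sparse a ha) as [M B].
  set (p := card (fun j => u j < a)). set (q := count_le u a).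
  assert (Hq : q = (p + card (fun j => u j = a))%nat).
  { unfold q, count_le, p. rewrite (card_count_lt _ M B), (card_count_lt (fun j => u j < a) M),
      (card_count_lt (fun j => u j = a) M) by (intros j hj; apply B; lra).
    rewrite <- count_lt_or by (intros; lra). apply count_lt_ext; intros; lra. }
  assert (E : forall k, order_stat u (S k) = a <-> (p <= k /\ k < q)%nat).
  { intros k. destruct (order_stat_correct (S k) ltac:(lia)) as [_ Sp].
    pose proof (Sp a ha) as S1. pose proof (order_stat_lt_iff (S k) a ltac:(lia) ha) as S2.
    fold p in S2. fold q in S1. split.
    - intros e. split.
      + destruct (Nat.le_gt_cases p k); auto. assert (order_stat u (S k) < a) by (apply S2; lia). lra.
      + assert (k < q)%nat by (apply S1; lra). lia.
    - intros [h1 h2]. assert (order_stat u (S k) <= a) by (apply S1; lia).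
      destruct (Rlt_dec (order_stat u (S k)) a) as [l|l]; [apply S2 in l; lia|lra]. }
  split; [exists q; intros k hk; apply E in hk; lia|].
  rewrite (card_count_lt _ q) by (intros k hk; apply E in hk; lia).
  rewrite (count_lt_ext _ (fun k => (p <= k /\ k < q)%nat)) by (intros; apply E).
  rewrite count_lt_interval by lia. lia.
Qed.
End OrderStatistics.

Lemma order_stat_lipschitz u w eps k : sparse_below0 u -> sparse_below0 w -> 0 < eps -> (1 <= k)%nat ->
  (forall a, a < 0 -> a + eps < 0 -> (count_le u a <= count_le w (a + eps))%nat) ->
  (forall a, a < 0 -> a + eps < 0 -> (count_le w a <= count_le u (a + eps))%nat) ->
  Rabs (order_stat u k - order_stat w k) <= eps.
Proof.
  intros Fu Fw he hk H1 H2.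
  assert (G : forall u w, sparse_below0 u -> sparse_below0 w ->
    (forall a, a < 0 -> a + eps < 0 -> (count_le u a <= count_le w (a + eps))%nat) ->
    order_stat w k <= order_stat u k + eps).
  { clear - he hk. intros u w Fu Fw H. destruct (Rle_dec (order_stat w k) (order_stat u k + eps)) as [|n]; auto.
    destruct (order_stat_correct u Fu k hk) as [hu Su].
    destruct (order_stat_correct w Fw k hk) as [hw Sw].
    assert (c1 : (k <= count_le u (order_stat u k))%nat) by (apply Su; lra).
    specialize (H (order_stat u k) ltac:(lra) ltac:(lra)).
    assert (order_stat w k <= order_stat u k + eps) by (apply Sw; [lra|lia]). lra. }
  pose proof (G u w Fu Fw H1). pose proof (G w u Fw Fu H2).
  apply Rabs_le; lra.
Qed.

(** * Lifting the circle cut at a point *)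

Definition lift (al : R) (x : Tpt) : R :=
  epsilon (inhabits 0) (fun t => al - 2 * PI < t <= al /\ x = cis t).

Lemma lift_spec al x : al - 2 * PI < lift al x <= al /\ x = cis (lift al x).
Proof. unfold lift. apply epsilon_spec, cis_surj_window. Qed.

Lemma lift_cis al t : al - 2 * PI < t <= al -> lift al (cis t) = t.
Proof.
  intros h. destruct (lift_spec al (cis t)) as [h' E].
  apply cis_inj_window; [apply Rabs_def1; lra|auto].
Qed.

Lemma lift_inj al x y : lift al x = lift al y -> x = y.
Proof. intros E. rewrite (proj2 (lift_spec al x)), (proj2 (lift_spec al y)), E; auto. Qed.

Lemma cis_eq_iff_lift al t x : al - 2 * PI < t <= al -> (cis t = x <-> t = lift al x).
Proof.
  intros h. split; intros E.
  - rewrite <- E, lift_cis; auto.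
  - rewrite E. symmetry; apply lift_spec.
Qed.

Lemma tdist_cis_small a b : Rabs (a - b) <= PI -> tdist (cis a) (cis b) = Rabs (a - b).
Proof. intros h. rewrite tdist_cis. apply acos_cos_abs; auto. Qed.

Section Cut.
Variable al : R.
Hypothesis al_range : PI / 2 <= al <= 3 * PI / 2.

Lemma tdist_Tone_cut : PI / 2 <= tdist Tone (cis al).
Proof.
  pose proof PI_RGT_0. rewrite <- cis_0.
  pose proof (tdist_cis_ge 0 al) as G. rewrite Rabs_minus_sym, Rminus_0_r, Rabs_pos_eq in G by lra.
  eapply Rle_trans; [|apply G; lra]. apply Rmin_glb; lra.
Qed.

Lemma lift_gap x eta : 0 < eta <= PI -> eta <= tdist x (cis al) ->
  al - 2 * PI + eta <= lift al x <= al - eta.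
Proof.
  intros he H. destruct (lift_spec al x) as [h E]. rewrite E, tdist_sym, tdist_cis in H.
  destruct (Rle_dec (al - lift al x) PI).
  - rewrite acos_cos_abs, Rabs_pos_eq in H by (rewrite ?Rabs_pos_eq; lra). lra.
  - rewrite acos_cos_reflect, Rabs_pos_eq in H by (rewrite ?Rabs_pos_eq; lra). lra.
Qed.

Lemma lift_dist x y eta : 0 < eta <= PI / 2 -> eta <= tdist x (cis al) -> eta <= tdist y (cis al) ->
  tdist x y < eta -> Rabs (lift al x - lift al y) = tdist x y.
Proof.
  intros he Hx Hy Hd. pose proof PI_RGT_0.
  pose proof (lift_gap x eta ltac:(lra) Hx). pose proof (lift_gap y eta ltac:(lra) Hy).
  rewrite (proj2 (lift_spec al x)), (proj2 (lift_spec al y)) in Hd |- *.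
  rewrite !lift_cis by apply lift_spec.
  assert (hb : Rabs (lift al x - lift al y) <= 2 * PI - 2 * eta) by (apply Rabs_le; lra).
  destruct (Rle_dec (Rabs (lift al x - lift al y)) PI).
  - rewrite tdist_cis_small; lra.
  - rewrite tdist_cis, acos_cos_reflect in Hd by lra. lra.
Qed.

Lemma lift_le_tdist_Tone x : Rmin (Rabs (lift al x)) (PI / 2) <= tdist x Tone.
Proof.
  pose proof PI_RGT_0. destruct (lift_spec al x) as [hw E]. rewrite E at 2. rewrite <- cis_0.
  assert (h : Rabs (lift al x) <= 3 * PI / 2) by (apply Rabs_le; lra).
  pose proof (tdist_cis_ge (lift al x) 0) as G. rewrite Rminus_0_r in G.
  eapply Rle_trans; [|apply G; lra]. unfold Rmin. repeat destruct Rle_dec; lra.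
Qed.

Lemma lift_sparse (s : nat -> Tpt) B : bounded_cost s B ->
  sparse_below0 (fun j => lift al (s j)) /\ sparse_below0 (fun j => - lift al (s j)).
Proof.
  intros HB. pose proof PI_RGT_0.
  assert (F : forall a, a < 0 -> finite_nat (fun j => - Rabs (lift al (s j)) <= a)).
  { intros a ha. destruct (finitely_many_large (fun j => tdist (s j) Tone) B (Rmin (- a) (PI / 2)))
      as [M HM]; auto.
    - apply Rmin_glb_lt; lra.
    - intros; apply tdist_nonneg.
    - exists M. intros j hj. apply HM. eapply Rle_trans; [|apply lift_le_tdist_Tone].
      unfold Rmin. repeat destruct Rle_dec; lra. }
  split; intros a ha; destruct (F a ha) as [M HM]; exists M; intros j hj; apply HM;
    pose proof (Rle_abs (lift al (s j))); pose proof (Rle_abs (- lift al (s j)));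
    rewrite Rabs_Ropp in *; lra.
Qed.
End Cut.

Definition avoids (S : rigged) (p : Tpt) (eta : R) :=
  forall x, S x <> Some 0%nat -> eta <= tdist x p.

Lemma avoids_near S0 S1 p eta : avoids S0 p eta -> Rbar_lt (rdist S0 S1) (Finite (eta / 2)) ->
  avoids S1 p (eta / 2).
Proof.
  intros G H. destruct (rdist_lt_witness _ _ _ H) as [s [t [hs [ht hc]]]].
  intros x hx. destruct (enumeration_hits S1 t x ht hx) as [j <-].
  pose proof (enum_cost_lt_term s t _ hc j). pose proof (G (s j) (enumeration_support S0 s j hs)).
  pose proof (tdist_triangle (s j) (t j) p). lra.
Qed.

(** Of the two end quarters of [[c', d']], one stays at distance
    [(d' - c') / 4] from a new point, since they are [(d' - c') / 2] apart. *)
Lemma cut_avoiding_list (l : list Tpt) c d : c < d <= c + PI ->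
  exists c' d' eta, c <= c' < d' /\ d' <= d /\ 0 < eta /\
    forall al, c' <= al <= d' -> forall x, In x l -> eta <= tdist x (cis al).
Proof.
  induction l as [|x l IH]; intros hcd.
  - exists c, d, 1. split; [lra|]. split; [lra|]. split; [lra|]. intros _ _ _ [].
  - destruct (IH hcd) as [c' [d' [eta [h1 [h2 [he H]]]]]].
    set (del := (d' - c') / 4).
    assert (hdel : 4 * del = d' - c') by (unfold del; lra).
    destruct (classic (forall al, c' <= al <= c' + del -> del <= tdist x (cis al))) as [A|A].
    + exists c', (c' + del), (Rmin eta del).
      split; [lra|]. split; [lra|]. split; [apply Rmin_glb_lt; lra|].
      intros al hal y [<-|hy].
      * eapply Rle_trans; [apply Rmin_r|apply A; lra].
      * eapply Rle_trans; [apply Rmin_l|apply H; auto; lra].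
    + apply not_all_ex_not in A. destruct A as [a1 A]. apply imply_to_and in A. destruct A as [ha1 A].
      exists (d' - del), d', (Rmin eta del).
      split; [lra|]. split; [lra|]. split; [apply Rmin_glb_lt; lra|].
      intros al hal y [<-|hy].
      * eapply Rle_trans; [apply Rmin_r|].
        pose proof (tdist_triangle (cis a1) x (cis al)).
        rewrite tdist_cis_small, Rabs_left1, tdist_sym in H0 by (try apply Rabs_le; lra).
        lra.
      * eapply Rle_trans; [apply Rmin_l|apply H; auto; lra].
Qed.

Lemma avoiding_cut (S : rigged) s B : is_enumeration S s -> bounded_cost s B ->
  exists al eta, PI / 2 <= al <= 3 * PI / 2 /\ 0 < eta <= PI / 4 /\ avoids S (cis al) eta.
Proof.
  intros Hs HB. pose proof PI_RGT_0.
  destruct (card_list _ (finitely_many_large _ B (PI / 4) ltac:(lra) (fun j => tdist_nonneg _ Tone) HB))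
    as [far [_ [_ Efar]]].
  destruct (cut_avoiding_list (map s far) (PI / 2) (3 * PI / 2) ltac:(lra))
    as [al [d' [eta [h1 [h2 [he Hfar]]]]]].
  exists al, (Rmin eta (PI / 4)). split; [lra|]. split.
  { split; [apply Rmin_glb_lt; lra|apply Rmin_r]. }
  intros x hx. destruct (enumeration_hits S s x Hs hx) as [j <-].
  destruct (Rle_dec (PI / 4) (tdist (s j) Tone)) as [f|f].
  - eapply Rle_trans; [apply Rmin_l|]. apply Hfar; [lra|]. apply in_map, Efar; auto.
  - eapply Rle_trans; [apply Rmin_r|].
    pose proof (tdist_Tone_cut al ltac:(lra)). pose proof (tdist_triangle Tone (s j) (cis al)).
    rewrite tdist_sym in f. lra.
Qed.

(** * The selection attached to a cut *)

(** Indices [3k], [3k+1], [3k+2] carry the [k+1]-st negative lift in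
    increasing order, the [k+1]-st positive lift in decreasing order, and [1]. *)
Definition select (al : R) (s : nat -> Tpt) (i : nat) : Tpt :=
  match (i mod 3)%nat with
  | 0%nat => cis (order_stat (fun j => lift al (s j)) (S (i / 3)))
  | 1%nat => cis (- order_stat (fun j => - lift al (s j)) (S (i / 3)))
  | _ => Tone
  end.

Lemma select_cases (P : nat -> Prop) :
  (forall k, P (3 * k)%nat) -> (forall k, P (3 * k + 1)%nat) -> (forall k, P (3 * k + 2)%nat) ->
  forall i, P i.
Proof.
  intros H0 H1 H2 i. rewrite (Nat.div_mod i 3) by lia.
  pose proof (Nat.mod_upper_bound i 3 ltac:(lia)).
  destruct (i mod 3)%nat as [|[|[|c]]]; [rewrite Nat.add_0_r; apply H0|apply H1|apply H2|lia].
Qed.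

Lemma select_mod3 al s k c : (c < 3)%nat -> select al s (3 * k + c) =
  match c with
  | 0%nat => cis (order_stat (fun j => lift al (s j)) (S k))
  | 1%nat => cis (- order_stat (fun j => - lift al (s j)) (S k))
  | _ => Tone
  end.
Proof.
  intros h. unfold select.
  replace ((3 * k + c) / 3)%nat with k by (apply (Nat.div_unique _ _ _ c); lia).
  replace ((3 * k + c) mod 3)%nat with c by (apply (Nat.mod_unique _ _ k); lia).
  reflexivity.
Qed.

Section Selection.
Variables (al eta B : R) (RS : rigged) (s : nat -> Tpt).
Hypotheses (al_range : PI / 2 <= al <= 3 * PI / 2) (eta_pos : 0 < eta <= PI / 2)
  (RS_infty : in_S_infty RS) (s_enum : is_enumeration RS s)
  (s_cost : bounded_cost s B) (RS_avoids : avoids RS (cis al) eta).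

Let u := fun j => lift al (s j).
Let v := fun j => - lift al (s j).

Lemma lift_window j : al - 2 * PI + eta <= u j <= al - eta.
Proof.
  apply lift_gap; [lra|]. apply RS_avoids, (enumeration_support RS); auto.
Qed.

Lemma order_stat_neg_window k : al - 2 * PI < order_stat u (S k) <= 0.
Proof.
  pose proof PI_RGT_0. destruct (lift_sparse al al_range s B s_cost) as [Fu _].
  pose proof (order_stat_nonpos u Fu (S k) ltac:(lia)).
  assert (al - 2 * PI + eta <= order_stat u (S k)).
  { apply order_stat_ge; auto; try lia; try lra. intros j; apply lift_window. }
  lra.
Qed.

Lemma order_stat_pos_window k : 0 <= - order_stat v (S k) <= al.
Proof.
  pose proof PI_RGT_0. destruct (lift_sparse al al_range s B s_cost) as [_ Fv].
  pose proof (order_stat_nonpos v Fv (S k) ltac:(lia)).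
  assert (- (al - eta) <= order_stat v (S k)).
  { apply order_stat_ge; auto; try lia; try lra. intros j; pose proof (lift_window j) as h; unfold u in h; unfold v; lra. }
  lra.
Qed.

Lemma select_eq_iff x i : x <> Tone -> (select al s i = x <->
  (exists k, i = (3 * k)%nat /\ order_stat u (S k) = lift al x) \/
  (exists k, i = (3 * k + 1)%nat /\ order_stat v (S k) = - lift al x)).
Proof.
  intros hx. pose proof PI_RGT_0. revert i. apply select_cases; intros k.
  - rewrite <- (Nat.add_0_r (3 * k)), select_mod3 by lia. fold u.
    pose proof (order_stat_neg_window k). rewrite cis_eq_iff_lift with (al := al) by lra.
    split; [intros e; left; exists k; split; auto; lia|].
    intros [[k' [e1 e2]]|[k' [e1 _]]]; [|lia]. replace k with k' by lia. exact e2.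
  - rewrite select_mod3 by lia. fold v.
    pose proof (order_stat_pos_window k). rewrite cis_eq_iff_lift with (al := al) by lra.
    split; [intros e; right; exists k; split; auto; lra|].
    intros [[k' [e1 _]]|[k' [e1 e2]]]; [lia|]. replace k with k' by lia. lra.
  - rewrite select_mod3 by lia. split; [intros e; congruence|].
    intros [[k' [e1 _]]|[k' [e1 _]]]; lia.
Qed.

Lemma select_card_via_stream (w : nat -> R) (c : nat) x a : sparse_below0 w -> a < 0 ->
  (forall j, w j = a <-> s j = x) ->
  (forall i, select al s i = x <-> exists k, i = (3 * k + c)%nat /\ order_stat w (S k) = a) ->
  finite_nat (fun i => select al s i = x) /\
  card (fun i => select al s i = x) = card (fun j => s j = x).
Proof.
  intros Fw ha Ew Ex. destruct (order_stat_mult w Fw a ha) as [F C].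
  destruct (card_image _ (fun k => 3 * k + c)%nat ltac:(intros p q h; cbv beta in h; lia) F) as [[M HM] C'].
  split; [exists M; intros i hi; apply HM, Ex; auto|].
  rewrite (card_ext _ _ Ex), C', C. apply card_ext, Ew.
Qed.

Lemma select_enumeration : is_enumeration RS (select al s).
Proof.
  pose proof PI_RGT_0. destruct (lift_sparse al al_range s B s_cost) as [Fu Fv].
  rewrite enumeration_iff_card. intros x. destruct (RS x) as [n|] eqn:Sx.
  2:{ apply in_S_infty_none in Sx; auto. subst x. intros N. exists (3 * N + 2)%nat.
      split; [lia|]. rewrite select_mod3; auto. }
  assert (hx : x <> Tone) by (intros ->; destruct RS_infty as [E _]; congruence).
  pose proof (proj1 (enumeration_iff_card RS s) s_enum x) as Ex. rewrite Sx in Ex.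
  destruct Ex as [_ <-].
  destruct (lift_spec al x) as [tw tx].
  assert (t0 : lift al x <> 0) by (intros e; apply hx; rewrite tx, e, cis_0; auto).
  destruct (Rlt_le_dec (lift al x) 0) as [tn|tp].
  - apply (select_card_via_stream u 0 x (lift al x)); auto.
    + intros j. split; intros e; [apply (lift_inj al); auto|unfold u; rewrite e; auto].
    + intros i. rewrite select_eq_iff by auto. setoid_rewrite Nat.add_0_r.
      split; [|intros h; left; auto]. intros [h|[k [_ e]]]; auto.
      pose proof (order_stat_nonpos v Fv (S k) ltac:(lia)). lra.
  - apply (select_card_via_stream v 1 x (- lift al x)); auto; [lra| |].
    + intros j. unfold v. split; intros e; [apply (lift_inj al); lra|rewrite e; auto].
    + intros i. rewrite select_eq_iff by auto.
      split; [|intros h; right; auto]. intros [[k [_ e]]|h]; auto.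
      pose proof (order_stat_nonpos u Fu (S k) ltac:(lia)). lra.
Qed.
End Selection.

Lemma count_le_shift (f : Tpt -> R) (S1 S2 : rigged) s1 s s2 t e :
  is_enumeration S1 s1 -> is_enumeration S1 s -> is_enumeration S2 s2 -> is_enumeration S2 t ->
  sparse_below0 (fun j => f (s1 j)) -> sparse_below0 (fun j => f (s2 j)) ->
  (forall j, Rabs (f (s j) - f (t j)) < e) ->
  forall a, a < 0 -> a + e < 0 ->
    (count_le (fun j => f (s1 j)) a <= count_le (fun j => f (s2 j)) (a + e))%nat.
Proof.
  intros h1 h h2 ht F1 F2 D a ha hae. unfold count_le.
  destruct (enumeration_card_transfer S1 s1 s (fun y => f y <= a) h1 h (F1 a ha)) as [A1 A2].
  destruct (enumeration_card_transfer S2 s2 t (fun y => f y <= a + e) h2 ht (F2 _ hae)) as [B1 B2].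
  rewrite <- A2, <- B2. apply card_mono; auto. intros j hj.
  specialize (D j). apply Rabs_def2 in D. lra.
Qed.

Lemma order_stat_close (f : Tpt -> R) (S1 S2 : rigged) s1 s s2 t e k :
  is_enumeration S1 s1 -> is_enumeration S1 s -> is_enumeration S2 s2 -> is_enumeration S2 t ->
  sparse_below0 (fun j => f (s1 j)) -> sparse_below0 (fun j => f (s2 j)) ->
  0 < e -> (forall j, Rabs (f (s j) - f (t j)) < e) -> (1 <= k)%nat ->
  Rabs (order_stat (fun j => f (s1 j)) k - order_stat (fun j => f (s2 j)) k) <= e.
Proof.
  intros h1 h h2 ht F1 F2 he D hk. apply order_stat_lipschitz; auto.
  - apply (count_le_shift f S1 S2 s1 s s2 t); auto.
  - apply (count_le_shift f S2 S1 s2 t s1 s); auto.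
    intros j. rewrite Rabs_minus_sym; auto.
Qed.

Lemma select_close al eta (S1 S2 : rigged) s1 s2 B1 B2 e :
  PI / 2 <= al <= 3 * PI / 2 -> 0 < eta <= PI / 2 -> 0 < e <= eta ->
  is_enumeration S1 s1 -> is_enumeration S2 s2 -> bounded_cost s1 B1 -> bounded_cost s2 B2 ->
  avoids S1 (cis al) eta -> avoids S2 (cis al) eta -> Rbar_lt (rdist S1 S2) (Finite e) ->
  forall i, tdist (select al s1 i) (select al s2 i) <= e.
Proof.
  intros Hal Heta He Hs1 Hs2 HB1 HB2 G1 G2 Hd.
  destruct (rdist_lt_witness _ _ _ Hd) as [s [t [hs [ht hc]]]].
  assert (D : forall j, Rabs (lift al (s j) - lift al (t j)) < e).
  { intros j. pose proof (enum_cost_lt_term s t _ hc j).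
    rewrite lift_dist with (eta := eta); try lra.
    - apply G1, (enumeration_support S1); auto.
    - apply G2, (enumeration_support S2); auto. }
  destruct (lift_sparse al Hal s1 B1 HB1) as [Fu1 Fv1].
  destruct (lift_sparse al Hal s2 B2 HB2) as [Fu2 Fv2].
  apply select_cases; intros k; rewrite ?select_mod3 by lia.
  - rewrite <- (Nat.add_0_r (3 * k)), !select_mod3 by lia.
    eapply Rle_trans; [apply tdist_cis_le|].
    apply (order_stat_close (lift al) S1 S2 s1 s s2 t); auto; lra || lia.
  - eapply Rle_trans; [apply tdist_cis_le|].
    rewrite <- Rabs_Ropp. replace (- (_ - _)) with
      (order_stat (fun j => - lift al (s1 j)) (S k) - order_stat (fun j => - lift al (s2 j)) (S k)) by ring.
    apply (order_stat_close (fun y => - lift al y) S1 S2 s1 s s2 t); auto; try lra; try lia.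
    intros j. rewrite <- Rabs_Ropp. replace (- _) with (lift al (s j) - lift al (t j)) by ring. auto.
  - rewrite tdist_refl. lra.
Qed.

(** * Gluing local selections along the path *)

Definition T_continuous_on (P : R -> Prop) (f : R -> Tpt) :=
  forall r, P r -> forall eps, 0 < eps -> exists del, 0 < del /\
    forall r', P r' -> Rabs (r' - r) < del -> tdist (f r) (f r') < eps.

Lemma T_continuous_on_sub (P Q : R -> Prop) f :
  (forall r, P r -> Q r) -> T_continuous_on Q f -> T_continuous_on P f.
Proof.
  intros PQ H r hr eps he. destruct (H r (PQ r hr) eps he) as [del [hdel Hdel]].
  exists del; split; auto.
Qed.

Lemma T_continuous_on_paste a t b f g : f t = g t ->
  T_continuous_on (fun r => a <= r <= t) f -> T_continuous_on (fun r => t <= r <= b) g ->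
  T_continuous_on (fun r => a <= r <= b) (fun r => if Rle_dec r t then f r else g r).
Proof.
  intros E Hf Hg r hr eps he. destruct (Rlt_le_dec r t) as [lt|ge].
  - destruct (Hf r ltac:(lra) eps he) as [d [hd Hd]].
    exists (Rmin d (t - r)). split; [apply Rmin_glb_lt; lra|].
    intros r' hr' hrr. pose proof (Rmin_l d (t - r)). pose proof (Rmin_r d (t - r)).
    apply Rabs_def2 in hrr.
    destruct (Rle_dec r t); [|lra]. destruct (Rle_dec r' t); [|lra]. apply Hd; [lra|apply Rabs_def1; lra].
  - destruct (Rle_lt_dec r t) as [e|gt].
    + replace r with t by lra.
      destruct (Hf t ltac:(lra) eps he) as [d1 [hd1 Hd1]].
      destruct (Hg t ltac:(lra) eps he) as [d2 [hd2 Hd2]].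
      exists (Rmin d1 d2). split; [apply Rmin_glb_lt; lra|].
      intros r' hr' hrr. pose proof (Rmin_l d1 d2). pose proof (Rmin_r d1 d2).
      destruct (Rle_dec t t); [|lra]. destruct (Rle_dec r' t).
      * apply Hd1; lra.
      * rewrite E. apply Hd2; lra.
    + destruct (Hg r ltac:(lra) eps he) as [d [hd Hd]].
      exists (Rmin d (r - t)). split; [apply Rmin_glb_lt; lra|].
      intros r' hr' hrr. pose proof (Rmin_l d (r - t)). pose proof (Rmin_r d (r - t)).
      apply Rabs_def2 in hrr.
      destruct (Rle_dec r t); [lra|]. destruct (Rle_dec r' t); [lra|].
      apply Hd; [lra|apply Rabs_def1; lra].
Qed.

Definition in_window (r0 d r : R) := 0 <= r <= 1 /\ Rabs (r - r0) < d.

Section Path.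
Variable S : R -> rigged.
Hypothesis S_in_S1 : forall r : R, 0 <= r <= 1 -> in_S1 (S r).
Hypothesis S_cont : forall r : R, 0 <= r <= 1 -> forall eps : R, 0 < eps ->
  exists delta : R, 0 < delta /\ forall r' : R, 0 <= r' <= 1 -> Rabs (r' - r) < delta ->
    Rbar_lt (rdist (S r) (S r')) (Finite eps).
Hypothesis S_0 : forall x : Tpt, S 0 x = rigged_one x.

Definition chosen_enum (r : R) : nat -> Tpt :=
  epsilon (inhabits (fun _ : nat => Tone)) (fun s => is_enumeration (S r) s /\ exists B, bounded_cost s B).

Lemma chosen_enum_spec r : 0 <= r <= 1 ->
  is_enumeration (S r) (chosen_enum r) /\ exists B, bounded_cost (chosen_enum r) B.
Proof.
  intros hr. unfold chosen_enum. apply epsilon_spec.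
  destruct (in_S1_bounded_enumeration (S r) (S_in_S1 r hr)) as [s [B [A C]]]. eauto.
Qed.

Lemma local_selection r0 : 0 <= r0 <= 1 -> exists d w, 0 < d /\
  (forall r, in_window r0 d r -> is_enumeration (S r) (fun j => w j r)) /\
  (forall j, T_continuous_on (in_window r0 d) (w j)).
Proof.
  intros hr0. pose proof PI_RGT_0.
  destruct (chosen_enum_spec r0 hr0) as [E0 [B0 HB0]].
  destruct (avoiding_cut (S r0) _ B0 E0 HB0) as [al [eta [Hal [Heta G0]]]].
  destruct (S_cont r0 hr0 (eta / 2) ltac:(lra)) as [d [hd Hd]].
  assert (G : forall r, in_window r0 d r -> avoids (S r) (cis al) (eta / 2)).
  { intros r [hr hrd]. apply (avoids_near (S r0)); auto. }
  exists d, (fun j r => select al (chosen_enum r) j). split; [auto|split].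
  - intros r Ir. destruct (chosen_enum_spec r (proj1 Ir)) as [E [B HB]].
    apply (select_enumeration al (eta / 2) B); auto; try lra. apply (S_in_S1 r (proj1 Ir)).
  - intros j r Ir eps he. set (e := Rmin (eps / 2) (eta / 2)).
    assert (he' : 0 < e) by (apply Rmin_glb_lt; lra).
    assert (e1 : e <= eps / 2) by apply Rmin_l. assert (e2 : e <= eta / 2) by apply Rmin_r.
    destruct (S_cont r (proj1 Ir) e he') as [del [hdel Hdel]].
    exists del; split; auto. intros r' Ir' hrr.
    destruct (chosen_enum_spec r (proj1 Ir)) as [E [B HB]].
    destruct (chosen_enum_spec r' (proj1 Ir')) as [E' [B' HB']].
    apply (Rle_lt_trans _ e); [|lra].
    apply (select_close al (eta / 2) (S r) (S r') _ _ B B'); auto; try lra.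
    apply Hdel; auto. apply Ir'.
Qed.

Definition selectable (t : R) := exists z : nat -> R -> Tpt,
  (forall j, T_continuous_on (fun r => 0 <= r <= t) (z j)) /\
  (forall r, 0 <= r <= t -> is_enumeration (S r) (fun j => z j r)).

Lemma selectable_0 : selectable 0.
Proof.
  exists (fun _ _ => Tone). split.
  - intros j r _ eps he. exists 1; split; [lra|]. intros. rewrite tdist_refl; auto.
  - intros r hr. replace r with 0 by lra. apply (enumeration_ext rigged_one).
    + intros x; rewrite S_0; auto.
    + intros x. unfold rigged_one. destruct excluded_middle_informative.
      * intros N; exists N; split; auto.
      * exists nil. repeat split; auto; [constructor|simpl; tauto|intros h; congruence].
Qed.

Lemma selectable_extend t t' r0 d w : 0 <= t <= t' -> t' <= 1 -> selectable t ->
  in_window r0 d t -> in_window r0 d t' ->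
  (forall r, in_window r0 d r -> is_enumeration (S r) (fun j => w j r)) ->
  (forall j, T_continuous_on (in_window r0 d) (w j)) ->
  selectable t'.
Proof.
  intros ht ht' [z [Zc Ze]] [_ h1] [_ h2] We Wc.
  assert (Ibet : forall r, t <= r <= t' -> in_window r0 d r).
  { intros r hr. split; [lra|]. apply Rabs_def2 in h1, h2. apply Rabs_def1; lra. }
  destruct (enumerations_bij (S t) (fun j => z j t) (fun j => w j t)) as [pi [sg [H1 [H2 H3]]]];
    [apply Ze; lra|apply We, Ibet; lra|].
  exists (fun j r => if Rle_dec r t then z j r else w (pi j) r). split.
  - intros j. apply T_continuous_on_paste; [symmetry; apply H3|apply Zc|].
    apply (T_continuous_on_sub _ (in_window r0 d)); auto.
  - intros r hr. destruct (Rle_dec r t); [apply Ze; lra|].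
    apply (enumeration_reindex pi sg H1 H2 (S r) (fun j => w j r)), We, Ibet; lra.
Qed.

Lemma selectable_1 : selectable 1.
Proof.
  set (E := fun t => 0 <= t <= 1 /\ selectable t).
  assert (bE : bound E) by (exists 1; intros x [hx _]; lra).
  destruct (completeness E bE (ex_intro _ 0 (conj (conj (Rle_refl 0) Rle_0_1) selectable_0)))
    as [T [UB LUB]].
  assert (T0 : 0 <= T) by (apply UB; split; [lra|apply selectable_0]).
  assert (T1 : T <= 1) by (apply LUB; intros x [hx _]; lra).
  destruct (local_selection T (conj T0 T1)) as [d [w [hd [We Wc]]]].
  assert (Ex : exists t, E t /\ T - d < t).
  { apply NNPP; intros N. assert (T <= T - d); [|lra].
    apply LUB. intros x Ex. destruct (Rle_dec x (T - d)); auto. exfalso; apply N; exists x; split; auto; lra. }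
  destruct Ex as [t [[ht Gt] htd]].
  assert (tT : t <= T) by (apply UB; split; auto).
  set (t' := Rmin (T + d / 2) 1).
  assert (ht' : T <= t' <= 1) by (split; [apply Rmin_glb|apply Rmin_r]; lra).
  assert (ht'' : t' <= T + d / 2) by apply Rmin_l.
  assert (Gt' : selectable t').
  { apply (selectable_extend t t' T d w); auto; try lra;
      split; try lra; apply Rabs_def1; lra. }
  assert (t' <= T) by (apply UB; split; [lra|auto]).
  replace 1 with t'; auto. unfold t', Rmin in *. destruct Rle_dec; lra.
Qed.
End Path.

Theorem mainTheorem4 (S : R -> rigged)
  (HS1 : forall r : R, 0 <= r <= 1 -> in_S1 (S r))
  (Hcont : forall r : R, 0 <= r <= 1 -> forall eps : R, 0 < eps ->
     exists delta : R, 0 < delta /\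
       forall r' : R, 0 <= r' <= 1 -> Rabs (r' - r) < delta ->
         Rbar_lt (rdist (S r) (S r')) (Finite eps))
  (HS0 : forall x : Tpt, S 0 x = rigged_one x) :
  exists z : nat -> R -> Tpt,
    (forall j : nat,
       forall r : R, 0 <= r <= 1 -> forall eps : R, 0 < eps ->
       exists delta : R, 0 < delta /\
         forall r' : R, 0 <= r' <= 1 -> Rabs (r' - r) < delta ->
           tdist (z j r) (z j r') < eps) /\
    (forall j : nat, z j 0 = Tone) /\
    (forall r : R, 0 <= r <= 1 -> is_enumeration (S r) (fun j => z j r)).
Proof.
  destruct (selectable_1 S HS1 Hcont HS0) as [z [z_cont z_enum]].
  exists z. split; [exact z_cont|split; [|intros r hr; apply z_enum; lra]].
  intros j. apply (enumeration_one (fun j => z j 0)).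
  apply (enumeration_ext (S 0)); [exact HS0|apply z_enum; lra].
Qed.
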